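(* Let $q$ be a prime, $n\ge1$, and let $S \subset \mathbb{F}_q^n\times\mathbb{F}_q^n$ contain no three points of the form $(x,y),(x,y+d),(x+d,y')$ with $x,y,y'\in\mathbb{F}_q^n$, $d\in\mathbb{F}_q^n\setminus\{0\}$. Let $X\subset \mathbb{F}_q^n$ be the projection of $S$ onto the first coordinate and, for $x\in X$, let $C_x=\{y\in\mathbb{F}_q^n : (x,y)\in S\}$. Let $d\ge 0$ and let $P$ be a polynomial in $n$ variables over $\mathbb{F}_q$ that is a linear combination of monomials $x_1^{a_1}\cdots x_n^{a_n}$ with $0\le a_i\le q-1$ and $\sum a_i\le d$, and suppose $P$ vanishes at every point of $\mathbb{F}_q^n\setminus X$. Then for every $x\in X$ with $P(x)\neq 0$, $$|C_x| \le 2\, m_{d/2}(q,n),$$ where $m_{k}(q,n)$ denotes the number of monomials $x_1^{a_1}\cdots x_n^{a_n}$ with $0\le a_i\le q-1$ for all $i$ and $a_1+\dots+a_n\le k$. *)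

From HB Require Import structures.
From mathcomp Require Import all_boot all_order all_algebra.
From mathcomp Require Import mpoly.
Set Implicit Arguments. Unset Strict Implicit. Unset Printing Implicit Defensive.
Import GRing.Theory.
Local Open Scope ring_scope.

Definition m_half (q n d : nat) : nat :=
  #|[set a : {ffun 'I_n -> 'I_q} | ((\sum_(i < n) (a i : nat)).*2 <= d)%N]|.

Definition reduced_deg_le (q n d : nat) (P : {mpoly 'F_q[n]}) : Prop :=
  forall m : 'X_{1..n}, m \in msupp P -> (forall i, (m i < q)%N) /\ (mdeg m <= d)%N.

Definition evalv (q n : nat) (P : {mpoly 'F_q[n]}) (x : 'rV['F_q]_n) : 'F_q :=
  P.@[fun i => x ord0 i].

From mathcomp Require Import all_boot all_algebra all_field.
From mathcomp Require Import mpoly.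
From mathcomp Require Import ring zify.
Set Implicit Arguments. Unset Strict Implicit. Unset Printing Implicit Defensive.
Import GRing.Theory.
Local Open Scope ring_scope.

(* Tao's slice-rank argument.  Fix x with P(x) != 0 and put
   f(y, y') := P(x + y' - y) on C_x.  If y != y' lie in C_x then x + (y' - y)
   is not in X, since otherwise (x, y), (x, y + (y' - y)), (x + (y' - y), y'')
   would be a forbidden configuration; so f vanishes off the diagonal and
   equals P(x) != 0 on it, and the matrix of f on C_x has full rank |C_x|.
   On the other hand f is a polynomial of degree <= d in (y, y'): each of its
   monomials has degree <= d/2 either in y or in y', and after reducing
   exponents with y^q = y this writes f as a sum of at most 2 m_{d/2}(q,n)
   products g(y) h(y'), so its rank is at most 2 m_{d/2}(q,n). *)

Section FunctionRank.
Variables (R : pzSemiRingType) (T : Type).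

Definition rank_le (r : nat) (f : T -> T -> R) : Prop :=
  exists u v : 'I_r -> T -> R, forall y y', f y y' = \sum_(k < r) u k y * v k y'.

Lemma rank_leD r s f g : rank_le r f -> rank_le s g ->
  rank_le (r + s) (fun y y' => f y y' + g y y').
Proof.
move=> [u1 [v1 ef]] [u2 [v2 eg]].
pose glue (w1 : 'I_r -> T -> R) (w2 : 'I_s -> T -> R) (k : 'I_(r + s)) :=
  match split k with inl i => w1 i | inr j => w2 j end.
exists (glue u1 u2), (glue v1 v2) => y y'.
rewrite big_split_ord ef eg /glue; congr (_ + _); apply: eq_bigr => k _.
  by rewrite (unsplitK (inl k)).
by rewrite (unsplitK (inr k)).
Qed.

Lemma rank_le_sum (I : finType) (A : {set I}) (g h : I -> T -> R) f :
  (forall y y', f y y' = \sum_(a in A) g a y * h a y') -> rank_le #|A| f.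
Proof.
move=> ef; exists (fun k => g (enum_val k)), (fun k => h (enum_val k)) => y y'.
by rewrite ef big_enum_val.
Qed.

End FunctionRank.

Lemma card_le_rank_diag (F : fieldType) (T : finType) (C : {set T})
    (r : nat) (f : T -> T -> F) :
  rank_le r f ->
  {in C &, forall y y', y != y' -> f y y' = 0} -> {in C, forall y, f y y != 0} ->
  (#|C| <= r)%N.
Proof.
move=> [u [v ef]] offdiag diag.
pose U := \matrix_(i < #|C|, k < r) u k (enum_val i).
pose V := \matrix_(k < r, j < #|C|) v k (enum_val j).
have UV : U *m V = diag_mx (\row_i f (enum_val i) (enum_val i)).
  apply/matrixP => i j; rewrite !mxE.
  under eq_bigr do rewrite !mxE.
  have [<-|ne] := eqVneq i j; first by rewrite mulr1n ef.
  rewrite mulr0n -ef offdiag ?enum_valP //.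
  by apply: contra ne => /eqP/enum_val_inj ->.
have UV_unit : U *m V \in unitmx.
  rewrite UV unitmxE det_diag unitfE; apply/prodf_neq0 => i _.
  by rewrite mxE diag ?enum_valP.
rewrite -(mxrank_unit UV_unit).
exact: leq_trans (mxrankM_maxl U V) (rank_leq_col U).
Qed.

Section BivariatePolynomials.
Variables (R : comNzRingType) (n : nat).
Local Notation V := 'rV[R]_n.

Definition monomial (u : 'I_n -> nat) (y : V) : R := \prod_i y ord0 i ^+ u i.

(* [bipoly_le D f]: f is a polynomial function of (y, y') of total degree at
   most D.  The last constructor stands in for functional extensionality. *)
Inductive bipoly_le : nat -> (V -> V -> R) -> Prop :=
| bipoly_le_monomial D c u v : (\sum_i u i + \sum_i v i <= D)%N ->
    bipoly_le D (fun y y' => c * monomial u y * monomial v y')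
| bipoly_leD D f g : bipoly_le D f -> bipoly_le D g ->
    bipoly_le D (fun y y' => f y y' + g y y')
| eq_bipoly_le D f g : f =2 g -> bipoly_le D f -> bipoly_le D g.

Lemma monomialD u u' y :
  monomial (fun i => u i + u' i)%N y = monomial u y * monomial u' y.
Proof. by rewrite /monomial -big_split; apply: eq_bigr => i _; rewrite exprD. Qed.

Lemma monomial0 y : monomial (fun _ => 0%N) y = 1.
Proof. by rewrite /monomial big1 // => i _; rewrite expr0. Qed.

Definition unit_exponent (i : 'I_n) (j : 'I_n) : nat := j == i.

Lemma monomial_unit_exponent i y : monomial (unit_exponent i) y = y ord0 i.
Proof.
rewrite /monomial (bigD1 i) //= /unit_exponent eqxx expr1 big1 ?mulr1 //.
by move=> j /negPf ->; rewrite expr0.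
Qed.

Lemma sum_unit_exponent i : (\sum_j unit_exponent i j)%N = 1%N.
Proof. by rewrite (bigD1 i) //= /unit_exponent eqxx big1 // => j /negPf ->. Qed.

Lemma bipoly_le_leq D E f : bipoly_le D f -> (D <= E)%N -> bipoly_le E f.
Proof.
elim=> {D f} [D c u v leD|D f g _ IHf _ IHg|D f g efg _ IH] leDE.
- by apply: bipoly_le_monomial; exact: leq_trans leD leDE.
- exact: bipoly_leD (IHf leDE) (IHg leDE).
- exact: eq_bipoly_le efg (IH leDE).
Qed.

Lemma bipoly_le_const c : bipoly_le 0 (fun _ _ => c).
Proof.
apply: (eq_bipoly_le (f := fun y y' => c * monomial (fun _ => 0%N) y
                                        * monomial (fun _ => 0%N) y')).
  by move=> y y'; rewrite !monomial0 !mulr1.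
by apply: bipoly_le_monomial; rewrite !big1.
Qed.

Lemma bipoly_le_coord (x : V) i : bipoly_le 1 (fun y y' => (x + y' - y) ord0 i).
Proof.
pose e0 := fun _ : 'I_n => 0%N.
apply: (eq_bipoly_le (f := fun y y' =>
    (x ord0 i * monomial e0 y * monomial e0 y'
     + 1 * monomial e0 y * monomial (unit_exponent i) y')
    + (-1) * monomial (unit_exponent i) y * monomial e0 y')).
  by move=> y y'; rewrite !monomial0 !monomial_unit_exponent !mxE; ring.
have sum_e0 : (\sum_j e0 j)%N = 0%N by rewrite big1.
by do 2?apply: bipoly_leD; apply: bipoly_le_monomial;
  rewrite ?sum_e0 ?sum_unit_exponent.
Qed.

Lemma bipoly_leM D E f g : bipoly_le D f -> bipoly_le E g ->
  bipoly_le (D + E) (fun y y' => f y y' * g y y').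
Proof.
move=> hf hg; elim: hf => {D f} [D c u v leD|D f f' _ IH _ IH'|D f f' eff' _ IH].
- elim: hg => {E g} [E c' u' v' leE|E g g' _ IH _ IH'|E g g' egg' _ IH].
  + apply: (eq_bipoly_le (f := fun y y' => (c * c')
        * monomial (fun i => u i + u' i)%N y
        * monomial (fun i => v i + v' i)%N y')).
      by move=> y y'; rewrite !monomialD; ring.
    by apply: bipoly_le_monomial; rewrite !big_split addnACA leq_add.
  + by apply: eq_bipoly_le (bipoly_leD IH IH') => y y' /=; rewrite mulrDr.
  + by apply: eq_bipoly_le IH => y y' /=; rewrite egg'.
- by apply: eq_bipoly_le (bipoly_leD IH IH') => y y' /=; rewrite mulrDl.
- by apply: eq_bipoly_le IH => y y' /=; rewrite eff'.
Qed.

Lemma bipoly_le_prod (I : Type) (r : seq I) (D : I -> nat) (f : I -> V -> V -> R) :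
  (forall i, bipoly_le (D i) (f i)) ->
  bipoly_le (\sum_(i <- r) D i) (fun y y' => \prod_(i <- r) f i y y').
Proof.
move=> hf; elim: r => [|i r IH].
  by rewrite big_nil; apply: eq_bipoly_le (bipoly_le_const 1) => y y';
    rewrite big_nil.
rewrite big_cons; apply: eq_bipoly_le (bipoly_leM (hf i) IH) => y y' /=.
by rewrite big_cons.
Qed.

Lemma bipoly_leX D f k : bipoly_le D f ->
  bipoly_le (k * D) (fun y y' => f y y' ^+ k).
Proof.
move=> hf; have := bipoly_le_prod (index_iota 0 k) (fun _ => hf).
rewrite sum_nat_const_nat subn0.
by apply: eq_bipoly_le => y y'; rewrite prodr_const_nat subn0.
Qed.

Lemma bipoly_le_sum (I : eqType) (D : nat) (r : seq I) (c : I -> R)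
    (g : I -> V -> V -> R) :
  (forall a, a \in r -> bipoly_le D (g a)) ->
  bipoly_le D (fun y y' => \sum_(a <- r) c a * g a y y').
Proof.
elim: r => [|a r IH] hg.
  apply: eq_bipoly_le (bipoly_le_leq (bipoly_le_const 0) (leq0n D)) => y y'.
  by rewrite big_nil.
have := bipoly_leM (bipoly_le_const (c a)) (hg a (mem_head a r)).
rewrite add0n => hca.
have hr := IH (fun b rb => hg b (mem_behead (s := a :: r) rb)).
by apply: eq_bipoly_le (bipoly_leD hca hr) => y y' /=; rewrite big_cons.
Qed.

Lemma bipoly_le_meval (x : V) (d : nat) (P : {mpoly R[n]}) :
  (forall m, m \in msupp P -> (mdeg m <= d)%N) ->
  bipoly_le d (fun y y' => P.@[fun i => (x + y' - y) ord0 i]).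
Proof.
move=> degP; apply: (eq_bipoly_le (f := fun y y' =>
  \sum_(m <- msupp P) P@_m * \prod_i (x + y' - y) ord0 i ^+ m i)).
  by move=> y y'; rewrite mevalE.
apply: bipoly_le_sum => m /degP; rewrite mdegE => lem.
apply: bipoly_le_leq lem; apply: bipoly_le_prod => i.
by have := bipoly_leX (m i) (bipoly_le_coord x i); rewrite muln1.
Qed.

End BivariatePolynomials.

Section ReducedExponents.
Variables (F : finFieldType) (q n : nat).
Hypothesis cardF : #|F| = q.
Local Notation V := 'rV[F]_n.

Lemma q_gt1 : (1 < q)%N.
Proof. by rewrite -cardF card_finNzRing_gt1. Qed.

Definition exp_reduce (j : nat) : nat := if j is k.+1 then (k %% q.-1).+1 else 0.

Lemma exp_reduce_lt j : (exp_reduce j < q)%N.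
Proof.
have lt1q := q_gt1; case: j => [|k] /=; first lia.
have : (k %% q.-1 < q.-1)%N by rewrite ltn_mod; lia.
lia.
Qed.

Lemma exp_reduce_leq j : (exp_reduce j <= j)%N.
Proof. by case: j => [|k] //=; rewrite ltnS leq_mod. Qed.

Lemma expr_reduce (y : F) j : y ^+ exp_reduce j = y ^+ j.
Proof.
have yq : y ^+ q = y by rewrite -cardF expf_card.
case: j => [|k] //=; rewrite [in RHS](divn_eq k q.-1).
elim: (k %/ q.-1)%N => [|t IH]; first by rewrite mul0n add0n.
have -> : ((t.+1 * q.-1 + k %% q.-1).+1 = (t * q.-1 + k %% q.-1) + q)%N.
  by have := q_gt1; rewrite mulSn; lia.
by rewrite exprD yq -exprSr.
Qed.

Definition reduced_monomial (a : {ffun 'I_n -> 'I_q}) (y : V) : F :=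
  monomial (fun i => nat_of_ord (a i)) y.

Definition reduce_exponents (u : 'I_n -> nat) : {ffun 'I_n -> 'I_q} :=
  [ffun i => Ordinal (exp_reduce_lt (u i))].

Lemma monomial_reduce u (y : V) :
  reduced_monomial (reduce_exponents u) y = monomial u y.
Proof. by apply: eq_bigr => i _; rewrite ffunE expr_reduce. Qed.

Variable d : nat.

Definition half_exponents : {set {ffun 'I_n -> 'I_q}} :=
  [set a : {ffun 'I_n -> 'I_q} | ((\sum_i (a i : nat)).*2 <= d)%N].

Lemma reduce_exponents_half u :
  ((\sum_i u i).*2 <= d)%N -> reduce_exponents u \in half_exponents.
Proof.
move=> le_ud; rewrite inE (leq_trans _ le_ud) // leq_double.
by apply: leq_sum => i _; rewrite ffunE exp_reduce_leq.
Qed.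

Definition half_split (f : V -> V -> F) : Prop :=
  exists G H : {ffun 'I_n -> 'I_q} -> V -> F, forall y y',
    f y y' = \sum_(a in half_exponents) reduced_monomial a y * G a y'
           + \sum_(a in half_exponents) H a y * reduced_monomial a y'.

Lemma half_splitD f g : half_split f -> half_split g ->
  half_split (fun y y' => f y y' + g y y').
Proof.
move=> [G1 [H1 ef]] [G2 [H2 eg]].
exists (fun a y' => G1 a y' + G2 a y'), (fun a y => H1 a y + H2 a y) => y y'.
rewrite ef eg; under [X in _ = X + _]eq_bigr do rewrite mulrDr.
under [X in _ = _ + X]eq_bigr do rewrite mulrDl.
by rewrite !big_split /=; ring.
Qed.

Lemma half_split_left a (g : V -> F) : a \in half_exponents ->
  half_split (fun y y' => reduced_monomial a y * g y').
Proof.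
move=> Aa; exists (fun b y' => if b == a then g y' else 0), (fun _ _ => 0).
move=> y y'; rewrite (bigD1 a) //= eqxx big1 => [|b /andP[_ /negPf->]];
  last by rewrite mulr0.
by rewrite big1 => [|b _]; [rewrite !addr0 | rewrite mul0r].
Qed.

Lemma half_split_right a (h : V -> F) : a \in half_exponents ->
  half_split (fun y y' => h y * reduced_monomial a y').
Proof.
move=> Aa; exists (fun _ _ => 0), (fun b y => if b == a then h y else 0).
move=> y y'; rewrite [X in _ = _ + X](bigD1 a) //= eqxx.
rewrite [X in _ = _ + (_ + X)]big1 => [|b /andP[_ /negPf->]];
  last by rewrite mul0r.
by rewrite big1 => [|b _]; [rewrite add0r addr0 | rewrite mulr0].
Qed.

Lemma bipoly_le_half_split D f : bipoly_le D f -> (D <= d)%N -> half_split f.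
Proof.
elim=> {D f} [D c u v leD|D f g _ IHf _ IHg|D f g efg _ IH] leDd.
- have [le_ud|lt_du] := leqP (\sum_i u i).*2 d.
    have := half_split_left (fun y' => c * monomial v y')
                            (reduce_exponents_half le_ud).
    by move=> [G [H e]]; exists G, H => y y'; rewrite -e monomial_reduce; ring.
  have le_vd : ((\sum_i v i).*2 <= d)%N by lia.
  have := half_split_right (fun y => c * monomial u y)
                           (reduce_exponents_half le_vd).
  by move=> [G [H e]]; exists G, H => y y'; rewrite -e monomial_reduce.
- exact: half_splitD (IHf leDd) (IHg leDd).
- by have [G [H e]] := IH leDd; exists G, H => y y'; rewrite -efg e.
Qed.

Lemma half_split_rank_le f : half_split f -> rank_le (2 * m_half q n d) f.
Proof.
move=> [G [H ef]]; rewrite mul2n -addnn.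
have lo := rank_le_sum (A := half_exponents) (g := reduced_monomial) (h := G)
  (fun _ _ => erefl).
have hi := rank_le_sum (A := half_exponents) (g := H) (h := reduced_monomial)
  (fun _ _ => erefl).
have [u [v e]] := rank_leD lo hi.
by exists u, v => y y'; rewrite ef e.
Qed.

End ReducedExponents.

Theorem mainTheorem5 (q n : nat) (hq : prime q) (hn : (1 <= n)%N)
  (S : {set 'rV['F_q]_n * 'rV['F_q]_n})
  (hS : forall x y y' dd : 'rV['F_q]_n, dd != 0 ->
          ~ [/\ (x, y) \in S, (x, y + dd) \in S & (x + dd, y') \in S])
  (d : nat) (P : {mpoly 'F_q[n]}) (hP : reduced_deg_le d P)
  (hvan : forall x : 'rV['F_q]_n, (forall y, (x, y) \notin S) -> evalv P x = 0) :
  forall x : 'rV['F_q]_n, (exists y, (x, y) \in S) -> evalv P x != 0 ->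
    (#|[set y | (x, y) \in S]| <= 2 * m_half q n d)%N.
Proof.
move=> x _ Px_neq0.
have rank_f : rank_le (2 * m_half q n d) (fun y y' => evalv P (x + y' - y)).
  apply/half_split_rank_le/(bipoly_le_half_split (card_Fp hq) _ (leqnn d)).
  by apply: bipoly_le_meval => m /hP[].
apply: (card_le_rank_diag rank_f) => [y y'|y _]; last by rewrite addrK.
rewrite !inE => Sxy Sxy' neq_yy'; apply: hvan => y''; apply/negP => Sy''.
apply: (hS x y y'' (y' - y)); first by rewrite subr_eq0 eq_sym.
by split; [exact: Sxy | rewrite addrCA subrr addr0 | rewrite addrA].
Qed.
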